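(* Let $\vec u,\vec v$ be disjoint lists of $n$ Boolean variables and $\vec a$ a list of auxiliary variables, and let $\mathcal{O}(\vec u,\vec v,\vec a)$ and $\mathcal{S}(\vec u,\vec v,\vec a)$ be pseudo-Boolean formulas such that $\mathcal{S}$ is a specification over $\vec a$. Suppose that there are cutting planes derivations showing (i) $\mathcal{S}(\vec x,\vec x,\vec a)\vdash\mathcal{O}(\vec x,\vec x,\vec a)$, and (ii) $\mathcal{S}(\vec x,\vec y,\vec a)\cup\mathcal{O}(\vec x,\vec y,\vec a)\cup\mathcal{S}(\vec y,\vec z,\vec b)\cup\mathcal{O}(\vec y,\vec z,\vec b)\cup\mathcal{S}(\vec x,\vec z,\vec c)\vdash\mathcal{O}(\vec x,\vec z,\vec c)$, where $\vec x,\vec y,\vec z$ are lists of $n$ variables and $\vec a,\vec b,\vec c$ are lists of fresh variables of the size of $\vec a$ (all pairwise disjoint). Then the relation $\preceq$ defined by $\mathcal{O}$ and $\mathcal{S}$ is a preorder (reflexive and transitive).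
   Context: PB constraints, formulas, substitutions, $\vdash$ (cutting planes derivability, which is sound) are as usual: a literal is $x$ or $\bar x=1-x$, a PB constraint is $\sum_i a_i\ell_i\ge A$ with negation $\sum_i a_i\bar\ell_i\ge\sum_i a_i-A+1$; for a formula $F(\vec u)$ and a list of literals/truth values $\vec w$ of equal length, $F(\vec w)$ denotes $F$ with each $u_i$ replaced by $w_i$. A formula $\mathcal{S}(\vec x,\vec a)=\{C_1,\dots,C_m\}$ is a specification over $\vec a$ if there are substitutions $\omega_1,\dots,\omega_m$ with $\mathrm{supp}(\omega_i)=\{x:\omega_i(x)\ne x\}\subseteq\vec a$ such that for each $i$, $\{C_1,\dots,C_{i-1},\neg C_i\}\vdash\{C_1{\upharpoonright}_{\omega_i},\dots,C_i{\upharpoonright}_{\omega_i}\}$. Relation defined by $\mathcal{O},\mathcal{S}$: for a list $\vec w$ of $n$ variables disjoint from $\vec a$ and total assignments $\alpha,\beta$ to $\vec w$, $\alpha\preceq\beta$ holds iff there exists an assignment $\rho$ to $\vec a$ such that $\mathcal{S}(\vec w{\upharpoonright}_\alpha,\vec w{\upharpoonright}_\beta,\vec a{\upharpoonright}_\rho)\wedge\mathcal{O}(\vec w{\upharpoonright}_\alpha,\vec w{\upharpoonright}_\beta,\vec a{\upharpoonright}_\rho)$ evaluates to true, where $\vec w{\upharpoonright}_\alpha$ denotes the list of values $\alpha(w_1),\dots,\alpha(w_n)$. *)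

From Stdlib Require Import ZArith List Lia RelationClasses.
Import ListNotations.
Open Scope Z_scope.

Definition var := nat.

(* A literal: x (lpos = true) or its negation xbar = 1 - x (lpos = false). *)
Record lit := Lit { lvar : var; lpos : bool }.

Definition negl (l : lit) : lit := Lit (lvar l) (negb (lpos l)).

(* A PB constraint  sum_i a_i l_i >= A  (integer coefficients). *)
Record constraint := Constr { terms : list (Z * lit); degree : Z }.

Definition formula := list constraint.

Definition assignment := var -> bool.

Definition lit_val (s : assignment) (l : lit) : bool :=
  if lpos l then s (lvar l) else negb (s (lvar l)).

Definition b2z (b : bool) : Z := if b then 1 else 0.

Definition lhs_val (s : assignment) (C : constraint) : Z :=
  fold_right Z.add 0 (map (fun t => fst t * b2z (lit_val s (snd t))) (terms C)).

Definition sat_c (s : assignment) (C : constraint) : Prop := degree C <= lhs_val s C.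

Definition sat (s : assignment) (F : formula) : Prop := forall C, In C F -> sat_c s C.

Definition sum_coefs (C : constraint) : Z := fold_right Z.add 0 (map fst (terms C)).

Definition negc (C : constraint) : constraint :=
  Constr (map (fun t => (fst t, negl (snd t))) (terms C)) (sum_coefs C - degree C + 1).

Inductive sterm := STLit (l : lit) | STConst (b : bool).

Definition subst := var -> sterm.

Definition id_subst : subst := fun x => STLit (Lit x true).

Definition supp_in (w : subst) (a : list var) : Prop :=
  forall x, w x <> STLit (Lit x true) -> In x a.

Definition subst_lit (w : subst) (l : lit) : sterm :=
  match w (lvar l) with
  | STLit l' => STLit (if lpos l then l' else negl l')
  | STConst b => STConst (if lpos l then b else negb b)
  end.

(* C|w : literals mapped to literals are renamed; literals mapped to
   constants are evaluated and moved to the right-hand side. *)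
Definition subst_terms (w : subst) (ts : list (Z * lit)) : list (Z * lit) :=
  flat_map (fun t => match subst_lit w (snd t) with
                     | STLit l' => [(fst t, l')]
                     | STConst _ => [] end) ts.

Definition subst_const (w : subst) (ts : list (Z * lit)) : Z :=
  fold_right Z.add 0
    (map (fun t => match subst_lit w (snd t) with
                   | STLit _ => 0
                   | STConst b => fst t * b2z b end) ts).

Definition subst_c (w : subst) (C : constraint) : constraint :=
  Constr (subst_terms w (terms C)) (degree C - subst_const w (terms C)).

Definition subst_f (w : subst) (F : formula) : formula := map (subst_c w) F.

Fixpoint subst_list (us : list var) (ws : list sterm) : subst :=
  match us, ws with
  | u :: us', w :: ws' => fun x => if Nat.eqb x u then w else subst_list us' ws' x
  | _, _ => id_subst
  end.

Definition vlit (x : var) : sterm := STLit (Lit x true).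

(* Constraints are reasoned about in linear form over variables:
   coefficient function and degree, after rewriting xbar = 1 - x. *)
Definition lin_coef (C : constraint) (x : var) : Z :=
  fold_right Z.add 0
    (map (fun t => if Nat.eqb (lvar (snd t)) x
                   then (if lpos (snd t) then fst t else - fst t) else 0) (terms C)).

Definition lin_deg (C : constraint) : Z :=
  degree C - fold_right Z.add 0
    (map (fun t => if lpos (snd t) then 0 else fst t) (terms C)).

Inductive cp (F : formula) : (var -> Z) -> Z -> Prop :=
| cp_axiom C : In C F -> cp F (lin_coef C) (lin_deg C)
| cp_litpos x : cp F (fun y => if Nat.eqb y x then 1 else 0) 0
| cp_litneg x : cp F (fun y => if Nat.eqb y x then -1 else 0) (-1)      (* xbar >= 0 *)
| cp_add f A g B : cp F f A -> cp F g B -> cp F (fun y => f y + g y) (A + B)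
| cp_mul c f A : 0 < c -> cp F f A -> cp F (fun y => c * f y) (c * A)
| cp_div d f A : 0 < d -> (forall y, (d | f y)) -> cp F f A ->
                 cp F (fun y => f y / d) (- ((- A) / d)).   (* ceil(A/d) *)

Definition derives (F : formula) (C : constraint) : Prop :=
  exists f, cp F f (lin_deg C) /\ forall y, f y = lin_coef C y.

Definition derives_all (F G : formula) : Prop := forall C, In C G -> derives F C.

Definition specification (S : formula) (a : list var) : Prop :=
  exists ws : list subst, length ws = length S /\
    forall i, (i < length S)%nat ->
      supp_in (nth i ws id_subst) a /\
      derives_all (firstn i S ++ [negc (nth i S (Constr [] 0))])
                  (subst_f (nth i ws id_subst) (firstn (Datatypes.S i) S)).

Definition vars_in (F : formula) (vs : list var) : Prop :=
  forall C, In C F -> forall t, In t (terms C) -> In (lvar (snd t)) vs.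

Definition disjoint (xs ys : list var) : Prop := forall x, In x xs -> ~ In x ys.

Definition inst (u v a : list var) (w1 w2 w3 : list sterm) (F : formula) : formula :=
  subst_f (subst_list (u ++ v ++ a) (w1 ++ w2 ++ w3)) F.

Definition cst (s : assignment) (xs : list var) : list sterm :=
  map (fun x => STConst (s x)) xs.

(* alpha <= beta iff there is rho to a such that
   S(w|alpha, w|beta, a|rho) /\ O(w|alpha, w|beta, a|rho) evaluates to true. *)
Definition rel (O S : formula) (u v a : list var) (w : list var)
  (alpha beta : assignment) : Prop :=
  exists rho : assignment,
    forall s : assignment,
      sat s (inst u v a (cst alpha w) (cst beta w) (cst rho a) (S ++ O)).

(* Cutting planes is sound, and instantiating a formula by a substitution
   amounts to evaluating it under the composed assignment. A specification can
   always be satisfied by changing the auxiliary variables only: repair its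
   constraints in order, using the witnessing substitution of the first
   falsified one. Hence alpha <= beta holds iff some assignment that reads
   alpha on u and beta on v satisfies S and O. For reflexivity take such a model
   of S for (alpha, alpha) and evaluate derivation (i) under it; for
   transitivity, from models t1 of (alpha, beta), t2 of (beta, gamma) and a model
   t3 of S for (alpha, gamma), evaluate derivation (ii) under the assignment
   sending x, y, z, a, b, c to the values of alpha, beta, gamma, t1, t2, t3. *)

From Stdlib Require Import ZArith List RelationClasses Permutation Lia Classical.
Import ListNotations.
Open Scope Z_scope.

Definition lin_val (f : var -> Z) (s : assignment) (L : list var) : Z :=
  fold_right Z.add 0 (map (fun y => f y * b2z (s y)) L).

Definition supported (f : var -> Z) (L : list var) : Prop :=
  forall y, ~ In y L -> f y = 0.

Lemma lin_val_add f g s L :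
  lin_val (fun y => f y + g y) s L = lin_val f s L + lin_val g s L.
Proof. induction L; unfold lin_val in *; simpl; lia. Qed.

Lemma lin_val_scale c f s L : lin_val (fun y => c * f y) s L = c * lin_val f s L.
Proof. induction L; unfold lin_val in *; simpl; lia. Qed.

Lemma lin_val_ext f g s L : (forall y, f y = g y) -> lin_val f s L = lin_val g s L.
Proof. intro Hfg; induction L; unfold lin_val in *; simpl; rewrite ?Hfg; lia. Qed.

Lemma lin_val_zero f s L : (forall y, In y L -> f y = 0) -> lin_val f s L = 0.
Proof.
  induction L as [|x L IH]; intro Hf; unfold lin_val in *; simpl; [reflexivity|].
  rewrite IH by (intros; apply Hf; simpl; auto). rewrite Hf by (simpl; auto). lia.
Qed.

Lemma lin_val_indicator x c s L : NoDup L -> In x L ->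
  lin_val (fun y => if Nat.eqb x y then c else 0) s L = c * b2z (s x).
Proof.
  induction L as [|y L IH]; intros Hnd Hx; [destruct Hx|].
  inversion Hnd as [|? ? HyL HndL]; subst.
  change (lin_val ?g s (y :: L)) with (g y * b2z (s y) + lin_val g s L); cbv beta.
  destruct (Nat.eqb_spec x y) as [->|Hxy].
  - rewrite lin_val_zero; [lia|].
    intros z Hz. destruct (Nat.eqb_spec y z); [subst; contradiction|reflexivity].
  - destruct Hx as [->|Hx]; [congruence|]. rewrite IH; auto.
Qed.

Lemma lin_val_nonzero f s L :
  lin_val f s L = lin_val f s (filter (fun y => negb (f y =? 0)) L).
Proof.
  induction L as [|x L IH]; unfold lin_val in *; simpl; [reflexivity|].
  destruct (Z.eqb_spec (f x) 0) as [Hx|]; simpl; rewrite IH; [rewrite Hx|]; lia.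
Qed.

Lemma lin_val_perm f s L1 L2 : Permutation L1 L2 -> lin_val f s L1 = lin_val f s L2.
Proof. induction 1; unfold lin_val in *; simpl; lia. Qed.

Lemma lin_val_support_indep f s L1 L2 : NoDup L1 -> NoDup L2 ->
  supported f L1 -> supported f L2 -> lin_val f s L1 = lin_val f s L2.
Proof.
  intros Hnd1 Hnd2 Hf1 Hf2. rewrite (lin_val_nonzero f s L1), (lin_val_nonzero f s L2).
  apply lin_val_perm, NoDup_Permutation; try apply NoDup_filter; auto.
  intro y; rewrite !filter_In.
  destruct (in_dec Nat.eq_dec y L1), (in_dec Nat.eq_dec y L2);
    rewrite ?Hf1, ?Hf2 by assumption; simpl; intuition discriminate.
Qed.

(* The meaning of a linear form [sum_y f y * y >= A]: [f] has finite support, so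
   its value is a finite sum over any duplicate-free list containing that
   support. *)
Definition lin_sat (s : assignment) (f : var -> Z) (A : Z) : Prop :=
  exists L, NoDup L /\ supported f L /\ A <= lin_val f s L.

Lemma lin_sat_iff s f A L : NoDup L -> supported f L ->
  lin_sat s f A <-> A <= lin_val f s L.
Proof.
  intros Hnd Hf. split.
  - intros (L' & Hnd' & Hf' & HA). now rewrite (lin_val_support_indep f s L L') by assumption.
  - intro HA. exists L. auto.
Qed.

Lemma lin_sat_ext s f g A : (forall y, f y = g y) -> lin_sat s f A -> lin_sat s g A.
Proof.
  intros Hfg (L & Hnd & Hf & HA). exists L. split; [exact Hnd|]. split.
  - intros y Hy. rewrite <- Hfg. auto.
  - now rewrite <- (lin_val_ext f g).
Qed.

Definition coef_of (ts : list (Z * lit)) (x : var) : Z :=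
  fold_right Z.add 0
    (map (fun t => if Nat.eqb (lvar (snd t)) x
                   then (if lpos (snd t) then fst t else - fst t) else 0) ts).

Definition neg_weight (ts : list (Z * lit)) : Z :=
  fold_right Z.add 0 (map (fun t => if lpos (snd t) then 0 else fst t) ts).

Definition terms_val (s : assignment) (ts : list (Z * lit)) : Z :=
  fold_right Z.add 0 (map (fun t => fst t * b2z (lit_val s (snd t))) ts).

Definition term_vars (ts : list (Z * lit)) : list var :=
  nodup Nat.eq_dec (map (fun t => lvar (snd t)) ts).

Lemma coef_of_supported ts : supported (coef_of ts) (term_vars ts).
Proof.
  intros y Hy. unfold term_vars in Hy. rewrite nodup_In in Hy.
  induction ts as [|t ts IH]; [reflexivity|]. unfold coef_of; simpl in *.
  destruct (Nat.eqb_spec (lvar (snd t)) y); [tauto|]. apply IH. tauto.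
Qed.

(* Rewriting each [~x] as [1 - x] moves [neg_weight] to the right-hand side. *)
Lemma lin_val_coef_of s L ts : NoDup L ->
  (forall t, In t ts -> In (lvar (snd t)) L) ->
  lin_val (coef_of ts) s L + neg_weight ts = terms_val s ts.
Proof.
  intros Hnd. induction ts as [|[c [x p]] ts IH]; intro Hts.
  - unfold neg_weight, terms_val. rewrite lin_val_zero; reflexivity.
  - unfold coef_of; cbn [map fold_right]. rewrite lin_val_add. fold (coef_of ts).
    rewrite lin_val_indicator by (auto; apply (Hts (c, Lit x p)); simpl; auto).
    specialize (IH (fun t Ht => Hts t (or_intror Ht))).
    unfold neg_weight, terms_val in *; cbn [map fold_right fst snd lpos lvar] in *.
    unfold lit_val in *; simpl in *. destruct p, (s x); simpl; lia.
Qed.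

Lemma sat_c_lin s C : sat_c s C <-> lin_sat s (lin_coef C) (lin_deg C).
Proof.
  rewrite (lin_sat_iff _ _ _ (term_vars (terms C)))
    by (apply NoDup_nodup || apply coef_of_supported).
  change (degree C <= terms_val s (terms C) <->
          degree C - neg_weight (terms C) <= lin_val (coef_of (terms C)) s (term_vars (terms C))).
  rewrite <- (lin_val_coef_of s (term_vars (terms C)) (terms C)).
  - lia.
  - apply NoDup_nodup.
  - intros t Ht. apply nodup_In, (in_map (fun t => lvar (snd t))), Ht.
Qed.

Lemma lin_sat_single_var s x c A : A <= c * b2z (s x) ->
  lin_sat s (fun y => if Nat.eqb y x then c else 0) A.
Proof.
  intro HA. exists [x]. split; [repeat constructor; auto|]. split.
  - intros y Hy. destruct (Nat.eqb_spec y x); [subst; simpl in Hy; tauto|reflexivity].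
  - unfold lin_val; simpl. rewrite Nat.eqb_refl. lia.
Qed.

Lemma cp_sound F s f A : sat s F -> cp F f A -> lin_sat s f A.
Proof.
  intros HF Hcp.
  induction Hcp as [C HC|x|x
                   |f A g B _ (L1 & Hnd1 & Hf1 & HA) _ (L2 & Hnd2 & Hg2 & HB)
                   |c f A Hc _ IH|d f A Hd Hdvd _ IH].
  - apply sat_c_lin, HF, HC.
  - apply lin_sat_single_var. destruct (s x); simpl; lia.
  - apply lin_sat_single_var. destruct (s x); simpl; lia.
  - set (L := nodup Nat.eq_dec (L1 ++ L2)).
    assert (HndL : NoDup L) by apply NoDup_nodup.
    assert (HL : forall y, ~ In y L -> ~ In y L1 /\ ~ In y L2).
    { intros y Hy. unfold L in Hy. rewrite nodup_In, in_app_iff in Hy. tauto. }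
    assert (HfL : supported f L) by (intros y Hy; apply Hf1, HL, Hy).
    assert (HgL : supported g L) by (intros y Hy; apply Hg2, HL, Hy).
    rewrite (lin_sat_iff _ _ _ L) by (auto; intros y Hy; rewrite HfL, HgL; auto).
    rewrite lin_val_add, (lin_val_support_indep f s L L1), (lin_val_support_indep g s L L2)
      by assumption.
    lia.
  - destruct IH as (L & Hnd & Hf & HA). exists L. split; [exact Hnd|]. split.
    + intros y Hy. rewrite Hf; auto; lia.
    + rewrite lin_val_scale. nia.
  - destruct IH as (L & Hnd & Hf & HA). exists L. split; [exact Hnd|]. split.
    + intros y Hy. rewrite Hf; auto.
    + assert (Hq : lin_val f s L = d * lin_val (fun y => f y / d) s L).
      { rewrite <- lin_val_scale. apply lin_val_ext. intro y.
        destruct (Hdvd y) as [k ->]. rewrite Z.div_mul; lia. }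
      (* [d * q >= A] for an integer [q] gives [q >= ceil (A / d)] *)
      assert (- lin_val (fun y => f y / d) s L <= (- A) / d).
      { apply Z.div_le_lower_bound; lia. }
      lia.
Qed.

Lemma derives_sound F C s : sat s F -> derives F C -> sat_c s C.
Proof.
  intros HF (f & Hcp & Hf). apply sat_c_lin.
  exact (lin_sat_ext s f _ _ Hf (cp_sound F s f _ HF Hcp)).
Qed.

Lemma derives_all_sound F G s : sat s F -> derives_all F G -> sat s G.
Proof. intros HF HG C HC. exact (derives_sound F C s HF (HG C HC)). Qed.

Lemma sat_app s F G : sat s (F ++ G) <-> sat s F /\ sat s G.
Proof. unfold sat. setoid_rewrite in_app_iff. firstorder. Qed.

Definition sterm_val (s : assignment) (t : sterm) : bool :=
  match t with STLit l => lit_val s l | STConst b => b end.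

Lemma lit_val_negl s l : lit_val s (negl l) = negb (lit_val s l).
Proof. destruct l as [x [|]]; unfold lit_val; simpl; auto using Bool.negb_involutive. Qed.

Lemma terms_val_subst s w ts :
  terms_val (fun x => sterm_val s (w x)) ts =
  terms_val s (subst_terms w ts) + subst_const w ts.
Proof.
  induction ts as [|[c [x p]] ts IH]; [reflexivity|].
  unfold terms_val, subst_terms, subst_const, subst_lit in *; simpl.
  rewrite IH. unfold lit_val at 1; simpl.
  destruct (w x) as [l|b], p; simpl; rewrite ?lit_val_negl; lia.
Qed.

Lemma sat_subst s w F : sat s (subst_f w F) <-> sat (fun x => sterm_val s (w x)) F.
Proof.
  assert (Hc : forall C, sat_c s (subst_c w C) <-> sat_c (fun x => sterm_val s (w x)) C).
  { intro C. unfold sat_c, lhs_val, subst_c; simpl.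
    fold (terms_val s (subst_terms w (terms C))).
    fold (terms_val (fun x => sterm_val s (w x)) (terms C)).
    rewrite terms_val_subst. lia. }
  unfold sat, subst_f. setoid_rewrite in_map_iff. split.
  - intros H C HC. apply Hc, H. eauto.
  - intros H C' (C & <- & HC). apply Hc, H, HC.
Qed.

Lemma sat_agree s1 s2 F L : vars_in F L -> (forall x, In x L -> s1 x = s2 x) ->
  (sat s1 F <-> sat s2 F).
Proof.
  intros HF Hs.
  assert (Hval : forall C, In C F -> lhs_val s1 C = lhs_val s2 C).
  { intros C HC. specialize (HF C HC). unfold lhs_val.
    induction (terms C) as [|[c [x p]] ts IH]; [reflexivity|]. simpl.
    rewrite IH by (intros t Ht; apply HF; simpl; auto).
    unfold lit_val; simpl. rewrite Hs by (apply (HF (c, Lit x p)); simpl; auto).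
    reflexivity. }
  unfold sat, sat_c. split; intros H C HC; specialize (H C HC); rewrite Hval in *; auto.
Qed.

Lemma subst_list_val s t us ws x :
  length us = length ws -> map (sterm_val s) ws = map t us -> In x us ->
  sterm_val s (subst_list us ws x) = t x.
Proof.
  revert ws; induction us as [|u us IH]; intros [|w ws] Hlen Hmap Hx;
    try discriminate; [destruct Hx|].
  simpl in Hmap |- *. injection Hmap as Hw Hws.
  destruct (Nat.eqb_spec x u) as [->|Hxu]; [exact Hw|].
  apply IH; auto. destruct Hx; [congruence|assumption].
Qed.

Lemma sat_subst_list s t us ws F : vars_in F us -> length us = length ws ->
  map (sterm_val s) ws = map t us ->
  (sat s (subst_f (subst_list us ws) F) <-> sat t F).
Proof.
  intros HF Hlen Hmap. rewrite sat_subst.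
  apply (sat_agree _ _ F us HF). intros x Hx. apply subst_list_val; auto.
Qed.

Lemma sat_inst s t u v a ws1 ws2 ws3 F : vars_in F (u ++ v ++ a) ->
  length ws1 = length u -> length ws2 = length v -> length ws3 = length a ->
  map (sterm_val s) ws1 = map t u -> map (sterm_val s) ws2 = map t v ->
  map (sterm_val s) ws3 = map t a ->
  (sat s (inst u v a ws1 ws2 ws3 F) <-> sat t F).
Proof.
  intros HF H1 H2 H3 E1 E2 E3. apply sat_subst_list; auto.
  - rewrite !length_app. lia.
  - rewrite !map_app. congruence.
Qed.

Lemma sterm_val_vlit s xs : map (sterm_val s) (map vlit xs) = map s xs.
Proof. apply map_map. Qed.

Lemma sterm_val_cst s t xs : map (sterm_val s) (cst t xs) = map t xs.
Proof. apply map_map. Qed.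

Lemma negc_sat s C : ~ sat_c s C -> sat_c s (negc C).
Proof.
  unfold sat_c, negc, lhs_val, sum_coefs; simpl.
  assert (E : forall ts,
    fold_right Z.add 0 (map (fun t => fst t * b2z (lit_val s (snd t)))
                          (map (fun t => (fst t, negl (snd t))) ts)) =
    fold_right Z.add 0 (map fst ts) -
    fold_right Z.add 0 (map (fun t => fst t * b2z (lit_val s (snd t))) ts)).
  { induction ts as [|[c l] ts IH]; simpl; auto.
    rewrite IH, lit_val_negl. destruct (lit_val s l); simpl; lia. }
  rewrite E. lia.
Qed.

Lemma firstn_succ_nth {A} (l : list A) k d : (k < length l)%nat ->
  firstn (Datatypes.S k) l = firstn k l ++ [nth k l d].
Proof.
  revert k; induction l as [|x l IH]; intros [|k] Hk; simpl in Hk; try lia;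
    [reflexivity|]. simpl. f_equal. apply IH. lia.
Qed.

Lemma supp_in_fixes w a t x : supp_in w a -> ~ In x a -> sterm_val t (w x) = t x.
Proof.
  intros Hw Hx. assert (E : w x = STLit (Lit x true)).
  { apply NNPP. intro Hne. exact (Hx (Hw x Hne)). }
  now rewrite E.
Qed.

Lemma specification_repair S a : specification S a -> forall t : assignment,
  exists t', (forall x, ~ In x a -> t' x = t x) /\ sat t' S.
Proof.
  intros (ws & _ & Hws) t.
  enough (Hpre : forall k, (k <= length S)%nat ->
            exists t', (forall x, ~ In x a -> t' x = t x) /\ sat t' (firstn k S)).
  { destruct (Hpre (length S) (le_n _)) as (t' & Ht' & HS).
    rewrite firstn_all in HS. eauto. }
  induction k as [|k IH]; intro Hk.
  - exists t. split; [reflexivity|]. intros C [].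
  - destruct IH as (t1 & Ht1 & HS1); [lia|].
    set (C := nth k S (Constr [] 0)).
    destruct (Z_le_dec (degree C) (lhs_val t1 C)) as [HC|HC].
    + exists t1. split; [exact Ht1|].
      rewrite (firstn_succ_nth S k (Constr [] 0)) by lia.
      apply sat_app. split; [exact HS1|].
      intros C' [<-|[]]. exact HC.
    + destruct (Hws k ltac:(lia)) as [Hsupp Hder].
      set (w := nth k ws id_subst) in *.
      (* the witness [w] of the falsified constraint repairs the whole prefix *)
      assert (Hneg : sat t1 (firstn k S ++ [negc C])).
      { apply sat_app. split; [exact HS1|]. intros C' [<-|[]]. now apply negc_sat. }
      exists (fun x => sterm_val t1 (w x)). split.
      * intros x Hx. rewrite (supp_in_fixes w a t1 x Hsupp Hx). auto.
      * apply sat_subst. exact (derives_all_sound _ _ _ Hneg Hder).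
Qed.

Lemma exists_assignment xs (bs : list bool) : NoDup xs -> length xs = length bs ->
  exists s : assignment, map s xs = bs.
Proof.
  revert bs; induction xs as [|x xs IH]; intros [|b bs] Hnd Hlen; try discriminate.
  - exists (fun _ => false). reflexivity.
  - inversion Hnd as [|? ? Hx Hnd']; subst.
    destruct (IH bs Hnd' ltac:(simpl in Hlen; lia)) as [s Hs].
    exists (fun y => if Nat.eqb y x then b else s y). simpl. rewrite Nat.eqb_refl.
    f_equal. rewrite <- Hs. apply map_ext_in. intros y Hy.
    destruct (Nat.eqb_spec y x); [subst; contradiction|reflexivity].
Qed.

Lemma map_app_inv {A B} (f : A -> B) l1 l2 b1 b2 : length l1 = length b1 ->
  map f (l1 ++ l2) = b1 ++ b2 -> map f l1 = b1 /\ map f l2 = b2.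
Proof.
  revert b1; induction l1 as [|x l1 IH]; intros [|b b1] Hlen Hmap; try discriminate.
  - auto.
  - simpl in Hmap. injection Hmap as <- Hmap. destruct (IH b1) as [<- <-]; auto.
Qed.

Lemma NoDup_app_disjoint {A} (l1 l2 : list A) x : NoDup (l1 ++ l2) -> In x l1 -> ~ In x l2.
Proof.
  induction l1 as [|y l1 IH]; intros Hnd Hx; [destruct Hx|].
  inversion Hnd as [|? ? Hy Hnd']; subst.
  destruct Hx as [<-|Hx]; [rewrite in_app_iff in Hy; tauto|auto].
Qed.

Lemma vars_in_app F G L : vars_in F L -> vars_in G L -> vars_in (F ++ G) L.
Proof. intros HF HG C HC. apply in_app_or in HC as [HC|HC]; [apply HF|apply HG]; exact HC. Qed.

Section Preorder.

Variables (n : nat) (u v a w : list var) (O S : formula).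
Hypothesis Hu : length u = n.
Hypothesis Hv : length v = n.
Hypothesis Hw : length w = n.
Hypothesis Huva : NoDup (u ++ v ++ a).
Hypothesis HO : vars_in O (u ++ v ++ a).
Hypothesis HS : vars_in S (u ++ v ++ a).
Hypothesis Hspec : specification S a.

Lemma rel_iff_model al be : rel O S u v a w al be <->
  exists t, map t u = map al w /\ map t v = map be w /\ sat t (S ++ O).
Proof.
  assert (HSO : vars_in (S ++ O) (u ++ v ++ a)) by now apply vars_in_app.
  split.
  - intros [rho Hrho].
    destruct (exists_assignment (u ++ v ++ a) (map al w ++ map be w ++ map rho a) Huva)
      as [t Ht]; [rewrite !length_app, !length_map; lia|].
    apply map_app_inv in Ht as [Htu Ht]; [|rewrite length_map; lia].
    apply map_app_inv in Ht as [Htv Hta]; [|rewrite length_map; lia].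
    exists t. split; [exact Htu|]. split; [exact Htv|].
    apply (sat_inst t t u v a (cst al w) (cst be w) (cst rho a)); auto;
      rewrite ?sterm_val_cst; unfold cst; rewrite ?length_map; auto; lia.
  - intros (t & Htu & Htv & Ht). exists t. intro s.
    apply (sat_inst s t u v a (cst al w) (cst be w) (cst t a)); auto;
      rewrite ?sterm_val_cst; unfold cst; rewrite ?length_map; auto; lia.
Qed.

Lemma specification_model_exists al be :
  exists t, map t u = map al w /\ map t v = map be w /\ sat t S.
Proof.
  destruct (exists_assignment (u ++ v) (map al w ++ map be w)) as [t0 Ht0].
  { rewrite app_assoc in Huva. exact (NoDup_app_remove_r _ _ Huva). }
  { rewrite !length_app, !length_map. lia. }
  apply map_app_inv in Ht0 as [Htu Htv]; [|rewrite length_map; lia].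
  destruct (specification_repair S a Hspec t0) as (t & Hta & Ht).
  assert (Hfix : forall l, incl l (u ++ v) -> map t l = map t0 l).
  { intros l Hl. apply map_ext_in. intros x Hx. apply Hta.
    rewrite app_assoc in Huva. exact (NoDup_app_disjoint _ _ x Huva (Hl x Hx)). }
  exists t. split; [|split; [|exact Ht]].
  - rewrite Hfix; [exact Htu|apply incl_appl, incl_refl].
  - rewrite Hfix; [exact Htv|apply incl_appr, incl_refl].
Qed.

Lemma rel_refl_of_derivation :
  (exists x a1 : list var,
      length x = n /\ length a1 = length a /\ NoDup (x ++ a1) /\
      derives_all (inst u v a (map vlit x) (map vlit x) (map vlit a1) S)
                  (inst u v a (map vlit x) (map vlit x) (map vlit a1) O)) ->
  Reflexive (rel O S u v a w).
Proof.
  intros (x & a1 & Hx & Ha1 & Hnd & Hder) al.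
  destruct (specification_model_exists al al) as (t & Htu & Htv & Ht).
  apply rel_iff_model. exists t. split; [exact Htu|]. split; [exact Htv|].
  apply sat_app. split; [exact Ht|].
  destruct (exists_assignment (x ++ a1) (map t u ++ map t a) Hnd) as [s Hs];
    [rewrite !length_app, !length_map; lia|].
  apply map_app_inv in Hs as [Hsx Hsa]; [|rewrite length_map; lia].
  assert (Hinst : forall F, vars_in F (u ++ v ++ a) ->
            sat s (inst u v a (map vlit x) (map vlit x) (map vlit a1) F) <-> sat t F).
  { intros F HF. apply sat_inst; rewrite ?length_map, ?sterm_val_vlit; auto; congruence. }
  apply (Hinst O HO), (derives_all_sound _ _ _ (proj2 (Hinst S HS) Ht) Hder).
Qed.

Lemma rel_trans_of_derivation :
  (exists x y z a1 b1 c1 : list var,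
      length x = n /\ length y = n /\ length z = n /\
      length a1 = length a /\ length b1 = length a /\ length c1 = length a /\
      NoDup (x ++ y ++ z ++ a1 ++ b1 ++ c1) /\
      derives_all
        (inst u v a (map vlit x) (map vlit y) (map vlit a1) S ++
         inst u v a (map vlit x) (map vlit y) (map vlit a1) O ++
         inst u v a (map vlit y) (map vlit z) (map vlit b1) S ++
         inst u v a (map vlit y) (map vlit z) (map vlit b1) O ++
         inst u v a (map vlit x) (map vlit z) (map vlit c1) S)
        (inst u v a (map vlit x) (map vlit z) (map vlit c1) O)) ->
  Transitive (rel O S u v a w).
Proof.
  intros (x & y & z & a1 & b1 & c1 & Hx & Hy & Hz & Ha1 & Hb1 & Hc1 & Hnd & Hder)
         al be ga Hab Hbg.
  apply rel_iff_model in Hab as (t1 & H1u & H1v & H1).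
  apply rel_iff_model in Hbg as (t2 & H2u & H2v & H2).
  destruct (specification_model_exists al ga) as (t3 & H3u & H3v & H3).
  destruct (exists_assignment (x ++ y ++ z ++ a1 ++ b1 ++ c1)
              (map t1 u ++ map t1 v ++ map t2 v ++ map t1 a ++ map t2 a ++ map t3 a) Hnd)
    as [s Hs]; [rewrite !length_app, !length_map; lia|].
  apply map_app_inv in Hs as [Hsx Hs]; [|rewrite length_map; lia].
  apply map_app_inv in Hs as [Hsy Hs]; [|rewrite length_map; lia].
  apply map_app_inv in Hs as [Hsz Hs]; [|rewrite length_map; lia].
  apply map_app_inv in Hs as [Hsa Hs]; [|rewrite length_map; lia].
  apply map_app_inv in Hs as [Hsb Hsc]; [|rewrite length_map; lia].
  assert (Hinst : forall p q r t F, vars_in F (u ++ v ++ a) ->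
            length p = n -> length q = n -> length r = length a ->
            map s p = map t u -> map s q = map t v -> map s r = map t a ->
            sat s (inst u v a (map vlit p) (map vlit q) (map vlit r) F) <-> sat t F).
  { intros. apply sat_inst; rewrite ?length_map, ?sterm_val_vlit; auto; lia. }
  apply rel_iff_model. exists t3. split; [exact H3u|]. split; [exact H3v|].
  apply sat_app in H1 as [H1S H1O]. apply sat_app in H2 as [H2S H2O].
  apply sat_app. split; [exact H3|].
  assert (Hxz : forall F, vars_in F (u ++ v ++ a) ->
            sat s (inst u v a (map vlit x) (map vlit z) (map vlit c1) F) <-> sat t3 F)
    by (intros; apply Hinst; auto; congruence).
  apply (Hxz O HO). eapply derives_all_sound; [|exact Hder].
  rewrite !sat_app. repeat split.
  - apply (Hinst x y a1 t1); auto.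
  - apply (Hinst x y a1 t1); auto.
  - apply (Hinst y z b1 t2); auto; congruence.
  - apply (Hinst y z b1 t2); auto; congruence.
  - apply Hxz; auto.
Qed.

End Preorder.

Close Scope Z_scope.

Theorem lemma2 (n : nat) (u v a : list var) (O S : formula) :
  length u = n -> length v = n -> NoDup (u ++ v ++ a) ->
  vars_in O (u ++ v ++ a) -> vars_in S (u ++ v ++ a) ->
  specification S a ->
  (* (i) S(x,x,a') |- O(x,x,a') *)
  (exists x a1 : list var,
      length x = n /\ length a1 = length a /\ NoDup (x ++ a1) /\
      derives_all (inst u v a (map vlit x) (map vlit x) (map vlit a1) S)
                  (inst u v a (map vlit x) (map vlit x) (map vlit a1) O)) ->
  (* (ii) S(x,y,a) u O(x,y,a) u S(y,z,b) u O(y,z,b) u S(x,z,c) |- O(x,z,c) *)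
  (exists x y z a1 b1 c1 : list var,
      length x = n /\ length y = n /\ length z = n /\
      length a1 = length a /\ length b1 = length a /\ length c1 = length a /\
      NoDup (x ++ y ++ z ++ a1 ++ b1 ++ c1) /\
      derives_all
        (inst u v a (map vlit x) (map vlit y) (map vlit a1) S ++
         inst u v a (map vlit x) (map vlit y) (map vlit a1) O ++
         inst u v a (map vlit y) (map vlit z) (map vlit b1) S ++
         inst u v a (map vlit y) (map vlit z) (map vlit b1) O ++
         inst u v a (map vlit x) (map vlit z) (map vlit c1) S)
        (inst u v a (map vlit x) (map vlit z) (map vlit c1) O)) ->
  forall w : list var, length w = n -> disjoint w a ->
    PreOrder (rel O S u v a w).
Proof.
  intros Hu Hv Huva HO HS Hspec Hrefl Htrans w Hw _.
  split; [eapply rel_refl_of_derivation | eapply rel_trans_of_derivation]; eassumption.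
Qed.
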